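(* A point $(x,y)\in\mathbb R^2$ belongs to $\mathcal P_0$ if and only if both $x$ and $y$ belong to $\mathbb F_0$.
   Context: An origami pair is a pair $(\mathcal P,\mathcal L)$ where $\mathcal P\subset\mathbb R^2$ is a set of points and $\mathcal L$ is a collection of lines in $\mathbb R^2$ such that: (i) the intersection point of any two non-parallel lines of $\mathcal L$ lies in $\mathcal P$; (ii) for any two distinct points of $\mathcal P$, the line through them is in $\mathcal L$; (iii) for any two distinct points of $\mathcal P$, the perpendicular bisector of the segment joining them is in $\mathcal L$; (iv) if $L_1,L_2\in\mathcal L$, then every line equidistant from $L_1$ and $L_2$ is in $\mathcal L$ (the midline if they are parallel, the angle bisectors if they intersect); (v) if $L_1,L_2\in\mathcal L$, then the mirror reflection of $L_2$ across $L_1$ is in $\mathcal L$. A set $\mathcal P\subset\mathbb R^2$ is closed under origami constructions if there is a collection of lines $\mathcal L$ with $(\mathcal P,\mathcal L)$ an origami pair. The set of origami constructible points is $\mathcal P_0=\bigcap\{\mathcal P : (0,0),(0,1)\in\mathcal P \text{ and } \mathcal P \text{ is closed under origami constructions}\}$. The set of origami numbers is $\mathbb F_0=\{\alpha\in\mathbb R : \exists v_1,v_2\in\mathcal P_0,\ |\alpha|=\operatorname{dist}(v_1,v_2)\}$. *)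

From Stdlib Require Import Reals.
Open Scope R_scope.

Definition point := (R * R)%type.
Definition pset := point -> Prop.

Definition dist2 (p q : point) : R :=
  (fst p - fst q) ^ 2 + (snd p - snd q) ^ 2.
Definition dist (p q : point) : R := sqrt (dist2 p q).

Definition is_line (S : pset) : Prop :=
  exists a b c : R, (a <> 0 \/ b <> 0) /\
    forall z : point, S z <-> a * fst z + b * snd z = c.

(* line through p and q (a line when p <> q) *)
Definition line_through (p q : point) : pset := fun z =>
  (fst q - fst p) * (snd z - snd p) - (snd q - snd p) * (fst z - fst p) = 0.

(* perpendicular bisector of the segment pq (a line when p <> q) *)
Definition perp_bisector (p q : point) : pset := fun z => dist2 z p = dist2 z q.

Definition is_sqdist (z : point) (S : pset) (r : R) : Prop :=
  (exists f, S f /\ dist2 z f = r) /\ (forall w, S w -> r <= dist2 z w).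

Definition equidistant_pt (z : point) (S1 S2 : pset) : Prop :=
  exists r, is_sqdist z S1 r /\ is_sqdist z S2 r.

Definition mirror (L : pset) (z z' : point) : Prop :=
  (forall w, L w -> dist2 w z = dist2 w z') /\ (z' <> z \/ L z).

Definition reflect_set (L S : pset) : pset := fun z' =>
  exists z, S z /\ mirror L z z'.

Definition origami_pair (P : pset) (Ls : pset -> Prop) : Prop :=
  (forall L, Ls L -> is_line L) /\
  (* (i) intersection point of two non-parallel (distinct, meeting) lines *)
  (forall L1 L2 p, Ls L1 -> Ls L2 -> (exists q, L1 q /\ ~ L2 q) ->
     L1 p -> L2 p -> P p) /\
  (forall p q, P p -> P q -> p <> q -> Ls (line_through p q)) /\
  (forall p q, P p -> P q -> p <> q -> Ls (perp_bisector p q)) /\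
  (forall L1 L2 L, Ls L1 -> Ls L2 -> (exists q, L1 q /\ ~ L2 q) -> is_line L ->
     (forall z, L z -> equidistant_pt z L1 L2) -> Ls L) /\
  (forall L1 L2, Ls L1 -> Ls L2 -> Ls (reflect_set L1 L2)).

Definition origami_closed (P : pset) : Prop := exists Ls, origami_pair P Ls.

Definition P0 : pset := fun v =>
  forall P : pset, P (0, 0) -> P (0, 1) -> origami_closed P -> P v.

Definition F0 (alpha : R) : Prop :=
  exists v1 v2, P0 v1 /\ P0 v2 /\ Rabs alpha = dist v1 v2.

(* Both directions rest on the fact that any set closed under origami
   constructions and containing (0,0) and (0,1) is closed under reflection in
   each of its lines: a point p is the intersection of the reflections of two
   lines through p and other points of the set.  With the axes and the
   diagonal y = x among the lines, this gives projections onto the axes,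
   the swap (x,y) -> (y,x), and the reconstruction of (x,y) from (x,0) and
   (0,y).  A distance d = |v1 v2| is carried to the x-axis by reflecting v2 in
   the perpendicular bisector of v1 and the origin (which sends v1 to the
   origin) and then reflecting the image w in a bisector of the angle between
   the line 0w and the x-axis. *)
From Pilot Require Import Defs.
From Stdlib Require Import Reals Lra Psatz Classical.
Open Scope R_scope.

Definition line_of (a b c : R) : pset := fun z => a * fst z + b * snd z = c.

Definition line_eqn (L : pset) (a b c : R) : Prop :=
  (a <> 0 \/ b <> 0) /\ forall z, L z <-> line_of a b c z.

Definition reflect_pt (a b c : R) (z : point) : point :=
  (fst z - 2 * ((a * fst z + b * snd z - c) / (a ^ 2 + b ^ 2)) * a,
   snd z - 2 * ((a * fst z + b * snd z - c) / (a ^ 2 + b ^ 2)) * b).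

Lemma dist2_sym p q : dist2 p q = dist2 q p.
Proof. unfold dist2; ring. Qed.

Lemma norm2_pos a b : a <> 0 \/ b <> 0 -> 0 < a ^ 2 + b ^ 2.
Proof.
  intros [H | H]; [pose proof (Rsqr_pos_lt a H) | pose proof (Rsqr_pos_lt b H)];
    unfold Rsqr in *; nra.
Qed.

Lemma line_eqn_line_of a b c : a <> 0 \/ b <> 0 -> line_eqn (line_of a b c) a b c.
Proof. intros Hab; split; [exact Hab | tauto]. Qed.

Lemma reflect_ptK a b c z :
  a <> 0 \/ b <> 0 -> reflect_pt a b c (reflect_pt a b c z) = z.
Proof.
  intros Hab; pose proof (norm2_pos a b Hab).
  destruct z as [x y]; unfold reflect_pt; cbn [fst snd]; f_equal; field; lra.
Qed.

Lemma dist2_reflect_pt a b c p q : a <> 0 \/ b <> 0 ->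
  dist2 (reflect_pt a b c p) (reflect_pt a b c q) = dist2 p q.
Proof.
  intros Hab; pose proof (norm2_pos a b Hab).
  destruct p, q; unfold dist2, reflect_pt; cbn [fst snd]; field; lra.
Qed.

Lemma mirror_reflect_pt L a b c z : line_eqn L a b c -> mirror L z (reflect_pt a b c z).
Proof.
  intros [Hab HL]; pose proof (norm2_pos a b Hab) as Hn.
  destruct z as [x y].
  set (k := (a * x + b * y - c) / (a ^ 2 + b ^ 2)).
  assert (Hk : k * (a ^ 2 + b ^ 2) = a * x + b * y - c) by (unfold k; field; lra).
  split.
  - intros [u v] Hw; apply HL in Hw; unfold line_of in Hw; cbn [fst snd] in Hw.
    unfold dist2, reflect_pt; cbn [fst snd]; fold k.
    replace ((u - (x - 2 * k * a)) ^ 2 + (v - (y - 2 * k * b)) ^ 2)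
      with ((u - x) ^ 2 + (v - y) ^ 2 + 4 * k * (a * u + b * v - (a * x + b * y))
            + 4 * (k * (k * (a ^ 2 + b ^ 2)))) by ring.
    rewrite Hk, Hw; ring.
  - destruct (Req_dec (a * x + b * y) c) as [Hon | Hoff]; [right; now apply HL|].
    left; unfold reflect_pt; cbn [fst snd]; fold k; intros E.
    injection E as Ex Ey.
    assert (Hk0 : k = 0).
    { destruct Hab as [Ha | Hb]; [apply (Rmult_eq_reg_r a) | apply (Rmult_eq_reg_r b)];
        lra. }
    rewrite Hk0 in Hk; lra.
Qed.

(* Equal distances to two points of L, the foot w0 of the origin and
   w0 + (-b, a), force z' - z to be normal to L. *)
Lemma mirror_eq_reflect_pt L a b c z z' :
  line_eqn L a b c -> mirror L z z' -> z' = reflect_pt a b c z.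
Proof.
  intros [Hab HL] [Hd Hne]; pose proof (norm2_pos a b Hab) as Hn.
  destruct z as [x y], z' as [x' y'].
  set (u := c * a / (a ^ 2 + b ^ 2)); set (v := c * b / (a ^ 2 + b ^ 2)).
  assert (Huv : a * u + b * v = c) by (unfold u, v; field; lra).
  assert (D0 := Hd (u, v) ltac:(apply HL; exact Huv)).
  assert (D1 := Hd (u - b, v + a) ltac:(apply HL; unfold line_of; cbn [fst snd]; nra)).
  unfold dist2 in D0, D1; cbn [fst snd] in D0, D1.
  assert (Hnormal : b * (x' - x) = a * (y' - y)) by nra.
  set (t := (a * (x' - x) + b * (y' - y)) / (a ^ 2 + b ^ 2)).
  assert (Ex : x' = x + t * a).
  { assert (x' - x - t * a = b * (b * (x' - x) - a * (y' - y)) / (a ^ 2 + b ^ 2))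
      by (unfold t; field; lra).
    rewrite Hnormal, Rminus_diag, Rmult_0_r, Rdiv_0_l in H; lra. }
  assert (Ey : y' = y + t * b).
  { assert (y' - y - t * b = a * (a * (y' - y) - b * (x' - x)) / (a ^ 2 + b ^ 2))
      by (unfold t; field; lra).
    rewrite Hnormal, Rminus_diag, Rmult_0_r, Rdiv_0_l in H; lra. }
  clearbody t; subst x' y'.
  assert (Ht : t * (t * (a ^ 2 + b ^ 2) + 2 * (a * x + b * y - c)) = 0).
  { rewrite <- Huv; nra. }
  unfold reflect_pt; cbn [fst snd].
  destruct (Rmult_integral _ _ Ht) as [Ht0 | Ht1].
  - subst t; destruct Hne as [Hne | Hon].
    + exfalso; apply Hne; f_equal; ring.
    + apply HL in Hon; unfold line_of in Hon; cbn [fst snd] in Hon.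
      rewrite Hon; f_equal; field; lra.
  - replace t with (t * (a ^ 2 + b ^ 2) / (a ^ 2 + b ^ 2)) by (field; lra).
    replace (t * (a ^ 2 + b ^ 2)) with (- 2 * (a * x + b * y - c)) by lra.
    f_equal; field; lra.
Qed.

Lemma reflect_set_line L M a b c z :
  line_eqn L a b c -> reflect_set L M z <-> M (reflect_pt a b c z).
Proof.
  intros HL; split.
  - intros [w [Mw Hm]]; rewrite (mirror_eq_reflect_pt L a b c w z HL Hm).
    now rewrite reflect_ptK by apply HL.
  - intros Hz; exists (reflect_pt a b c z); split; [exact Hz|].
    pose proof (mirror_reflect_pt L a b c (reflect_pt a b c z) HL) as H.
    now rewrite reflect_ptK in H by apply HL.
Qed.

Lemma sqdist_line L a b c z : line_eqn L a b c ->
  is_sqdist z L ((a * fst z + b * snd z - c) ^ 2 / (a ^ 2 + b ^ 2)).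
Proof.
  intros [Hab HL]; pose proof (norm2_pos a b Hab) as Hn.
  destruct z as [x y]; cbn [fst snd]; split.
  - set (k := (a * x + b * y - c) / (a ^ 2 + b ^ 2)).
    exists (x - k * a, y - k * b); split.
    + apply HL; unfold line_of, k; cbn [fst snd]; field; lra.
    + unfold dist2, k; cbn [fst snd]; field; lra.
  - intros [u v] Hw; apply HL in Hw; unfold line_of in Hw; cbn [fst snd] in Hw.
    unfold dist2; cbn [fst snd].
    (* Lagrange's identity for (a, b) and (x - u, y - v). *)
    assert (E : (a ^ 2 + b ^ 2) * ((x - u) ^ 2 + (y - v) ^ 2) - (a * x + b * y - c) ^ 2
                = (a * (y - v) - b * (x - u)) ^ 2) by (rewrite <- Hw; ring).
    apply (Rmult_le_reg_r (a ^ 2 + b ^ 2)); [lra|].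
    unfold Rdiv; rewrite Rmult_assoc, Rinv_l, Rmult_1_r by lra.
    pose proof (pow2_ge_0 (a * (y - v) - b * (x - u))); lra.
Qed.

Lemma line_eqn_perp_bisector p q : p <> q ->
  line_eqn (perp_bisector p q) (2 * (fst q - fst p)) (2 * (snd q - snd p))
    (fst q ^ 2 + snd q ^ 2 - fst p ^ 2 - snd p ^ 2).
Proof.
  destruct p as [x y], q as [x' y']; cbn [fst snd]; intros Hne; split.
  - destruct (Req_dec x x'); [right; intros H'; apply Hne; f_equal|left]; lra.
  - intros [u v]; unfold perp_bisector, dist2, line_of; cbn [fst snd].
    split; intros; lra.
Qed.

Lemma reflect_perp_bisector p q : p <> q ->
  exists a b c, line_eqn (perp_bisector p q) a b c /\ reflect_pt a b c p = q.
Proof.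
  intros Hne; pose proof (line_eqn_perp_bisector p q Hne) as E.
  do 3 eexists; split; [exact E|].
  symmetry; apply (mirror_eq_reflect_pt _ _ _ _ _ _ E).
  split; [intros w Hw; exact Hw | now left].
Qed.

Definition yaxis : pset := line_through (0, 0) (0, 1).
Definition xaxis : pset := perp_bisector (0, -1/2) (0, 1/2).

Lemma line_eqn_yaxis k : k <> 0 -> line_eqn yaxis k 0 0.
Proof.
  intros Hk; split; [now left|].
  intros [x y]; unfold yaxis, line_through, line_of; cbn [fst snd].
  split; intros H; [nra|]. assert (x = 0) by (apply (Rmult_eq_reg_l k); lra). nra.
Qed.

Lemma line_eqn_xaxis k : k <> 0 -> line_eqn xaxis 0 k 0.
Proof.
  intros Hk; split; [now right|].
  intros [x y]; unfold xaxis, perp_bisector, dist2, line_of; cbn [fst snd].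
  split; intros H; [assert (y = 0) by lra; subst; field|].
  assert (y = 0) by (apply (Rmult_eq_reg_l k); lra); subst; field.
Qed.

Section OrigamiClosed.

Variables (P : pset) (Ls : pset -> Prop).
Hypothesis HO : origami_pair P Ls.

Lemma P_meet L1 L2 p : Ls L1 -> Ls L2 -> (exists q, L1 q /\ ~ L2 q) ->
  L1 p -> L2 p -> P p.
Proof. apply HO. Qed.

Lemma Ls_line_through p q : P p -> P q -> p <> q -> Ls (line_through p q).
Proof. apply HO. Qed.

Lemma Ls_perp_bisector p q : P p -> P q -> p <> q -> Ls (perp_bisector p q).
Proof. apply HO. Qed.

(* When the normals have equal length, the distances of a point to L1 and L2
   agree as soon as the two affine forms agree. *)
Lemma Ls_equidistant L1 L2 a b c a' b' c' : Ls L1 -> Ls L2 ->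
  line_eqn L1 a b c -> line_eqn L2 a' b' c' -> a ^ 2 + b ^ 2 = a' ^ 2 + b' ^ 2 ->
  (exists q, L1 q /\ ~ L2 q) -> a - a' <> 0 \/ b - b' <> 0 ->
  Ls (line_of (a - a') (b - b') (c - c')).
Proof.
  intros H1 H2 E1 E2 Hnorm Hq Hab.
  destruct HO as (_ & _ & _ & _ & Hequi & _).
  apply (Hequi L1 L2 _ H1 H2 Hq).
  - exists (a - a'), (b - b'), (c - c'); split; [exact Hab | tauto].
  - intros z Hz; unfold line_of in Hz.
    exists ((a * fst z + b * snd z - c) ^ 2 / (a ^ 2 + b ^ 2)); split.
    + now apply sqdist_line.
    + replace (a * fst z + b * snd z - c) with (a' * fst z + b' * snd z - c') by lra.
      rewrite Hnorm; now apply sqdist_line.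
Qed.

Lemma P_reflect_noncollinear L a b c p q r : Ls L -> line_eqn L a b c ->
  P p -> P q -> P r -> ~ line_through p q r -> P (reflect_pt a b c p).
Proof.
  intros HL EL Hp Hq Hr Hpqr.
  destruct HO as (_ & _ & _ & _ & _ & Hrefl).
  assert (Hpq : p <> q) by (intros <-; apply Hpqr; unfold line_through; ring).
  assert (Hpr : p <> r) by (intros <-; apply Hpqr; unfold line_through; ring).
  assert (Hthrough : forall s w, line_through s w s)
    by (intros; unfold line_through; ring).
  apply (P_meet (reflect_set L (line_through p q)) (reflect_set L (line_through p r)));
    try apply Hrefl; try apply Ls_line_through; auto.
  - exists (reflect_pt a b c q).
    rewrite !(reflect_set_line L _ a b c _ EL), reflect_ptK by apply EL.
    split; [unfold line_through; ring|].
    intros H; apply Hpqr; unfold line_through in *; lra.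
  - apply (reflect_set_line L _ a b c _ EL); rewrite reflect_ptK by apply EL; auto.
  - apply (reflect_set_line L _ a b c _ EL); rewrite reflect_ptK by apply EL; auto.
Qed.

Hypotheses (P00 : P (0, 0)) (P01 : P (0, 1)).

Lemma Ls_yaxis : Ls yaxis.
Proof. apply Ls_line_through; auto; intros E; injection E; lra. Qed.

Lemma Ls_perp_bisector01 : Ls (perp_bisector (0, 0) (0, 1)).
Proof. apply Ls_perp_bisector; auto; intros E; injection E; lra. Qed.

Lemma P_half : P (0, 1/2).
Proof.
  pose proof (line_eqn_perp_bisector (0, 0) (0, 1) ltac:(intros E; injection E; lra)) as E.
  cbn [fst snd] in E.
  apply (P_meet _ _ _ Ls_yaxis Ls_perp_bisector01).
  - exists (0, 0); split; [unfold yaxis, line_through; cbn; ring|].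
    rewrite (proj2 E); unfold line_of; cbn; lra.
  - unfold yaxis, line_through; cbn; ring.
  - apply E; unfold line_of; cbn; lra.
Qed.

(* The intersection of y = 1/4 with a bisector of the y-axis and y = 1/2. *)
Lemma P_off_yaxis : P (-1/4, 1/4).
Proof.
  assert (Hne : (0, 0) <> (0, 1/2)) by (intros E; injection E; lra).
  pose proof (line_eqn_perp_bisector _ _ Hne) as Equarter; cbn [fst snd] in Equarter.
  pose proof (line_eqn_perp_bisector (0, 0) (0, 1) ltac:(intros E; injection E; lra))
    as Ehalf; cbn [fst snd] in Ehalf.
  assert (Hbis : Ls (line_of (2 - 2 * (0 - 0)) (0 - 2 * (1 - 0))
                             (0 - (0 ^ 2 + 1 ^ 2 - 0 ^ 2 - 0 ^ 2)))).
  { apply (Ls_equidistant _ _ _ _ _ _ _ _ Ls_yaxis Ls_perp_bisector01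
             (line_eqn_yaxis 2 ltac:(lra)) Ehalf); try lra.
    exists (0, 0); split; [unfold yaxis, line_through; cbn; ring|].
    rewrite (proj2 Ehalf); unfold line_of; cbn; lra. }
  apply (P_meet _ _ _ Hbis (Ls_perp_bisector _ _ P00 P_half Hne)).
  - exists (0, 1/2); split; [unfold line_of; cbn; lra|].
    rewrite (proj2 Equarter); unfold line_of; cbn; lra.
  - unfold line_of; cbn; lra.
  - apply Equarter; unfold line_of; cbn; lra.
Qed.

Lemma P_reflect L a b c p : Ls L -> line_eqn L a b c -> P p -> P (reflect_pt a b c p).
Proof.
  intros HL EL Hp; destruct p as [x y].
  destruct (Req_dec x 0) as [-> | Hx].
  - destruct (Req_dec y 0) as [-> | Hy].
    + apply (P_reflect_noncollinear L a b c _ (0, 1) (-1/4, 1/4));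
        auto using P_off_yaxis; unfold line_through; cbn; lra.
    + apply (P_reflect_noncollinear L a b c _ (0, 0) (-1/4, 1/4));
        auto using P_off_yaxis; unfold line_through; cbn; intros E; apply Hy; nra.
  - apply (P_reflect_noncollinear L a b c _ (0, 0) (0, 1)); auto.
    unfold line_through; cbn; intros E; apply Hx; nra.
Qed.

Lemma P_eq_reflect L a b c p q : Ls L -> line_eqn L a b c -> P p ->
  reflect_pt a b c p = q -> P q.
Proof. intros HL EL Hp <-; now apply (P_reflect L). Qed.

Lemma P_oppx x y : P (x, y) -> P (- x, y).
Proof.
  intros H; apply (P_eq_reflect _ _ _ _ _ _ Ls_yaxis (line_eqn_yaxis 1 ltac:(lra)) H).
  unfold reflect_pt; cbn; f_equal; field.
Qed.

Lemma Ls_xaxis : Ls xaxis.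
Proof.
  assert (Hne : (0, 0) <> (0, 1/2)) by (intros E; injection E; lra).
  apply Ls_perp_bisector; auto using P_half; [|intros E; injection E; lra].
  apply (P_eq_reflect _ _ _ _ _ _ (Ls_perp_bisector _ _ P00 P_half Hne)
           (line_eqn_perp_bisector _ _ Hne) P01).
  unfold reflect_pt; cbn; f_equal; field.
Qed.

Lemma P_swap x y : P (x, y) -> P (y, x).
Proof.
  intros H.
  assert (Hdiag : Ls (line_of (0 - 1) (1 - 0) (0 - 0))).
  { apply (Ls_equidistant _ _ _ _ _ _ _ _ Ls_xaxis Ls_yaxis
             (line_eqn_xaxis 1 ltac:(lra)) (line_eqn_yaxis 1 ltac:(lra))); try lra.
    exists (1, 0); rewrite (proj2 (line_eqn_xaxis 1 ltac:(lra))),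
      (proj2 (line_eqn_yaxis 1 ltac:(lra))); unfold line_of; cbn; lra. }
  apply (P_eq_reflect _ _ _ _ _ _ Hdiag
           (line_eqn_line_of (0 - 1) (1 - 0) (0 - 0) ltac:(left; lra)) H).
  unfold reflect_pt; cbn; f_equal; field.
Qed.

Lemma P_oppy x y : P (x, y) -> P (x, - y).
Proof. intros H; now apply P_swap, P_oppx, P_swap. Qed.

Lemma P_proj_x x y : P (x, y) -> P (x, 0).
Proof.
  intros H; destruct (Req_dec y 0) as [<- | Hy]; [exact H|].
  pose proof (line_eqn_xaxis 1 ltac:(lra)) as Ex.
  assert (Hvert : Ls (line_through (x, y) (x, - y)))
    by (apply Ls_line_through; auto using P_oppy; intros E; injection E; lra).
  apply (P_meet _ _ _ Hvert Ls_xaxis).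
  - exists (x, y); rewrite (proj2 Ex); unfold line_through, line_of; cbn.
    split; [ring | lra].
  - unfold line_through; cbn; ring.
  - apply Ex; unfold line_of; cbn; lra.
Qed.

Lemma P_pair x y : P (x, 0) -> P (0, y) -> P (x, y).
Proof.
  intros Hx Hy; destruct (Req_dec x 0) as [-> | Hx0]; [exact Hy|].
  assert (Hne : (0, 0) <> (x, 0)) by (intros E; injection E; lra).
  apply (P_eq_reflect _ _ _ _ _ _ (Ls_perp_bisector _ _ P00 Hx Hne)
           (line_eqn_perp_bisector _ _ Hne) Hy).
  unfold reflect_pt; cbn; f_equal; field; auto.
Qed.

Lemma P_dist2_origin v1 v2 : P v1 -> P v2 ->
  exists w, P w /\ dist2 w (0, 0) = dist2 v1 v2.
Proof.
  intros Hv1 Hv2.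
  destruct (classic (v1 = (0, 0))) as [-> | Hne].
  { exists v2; split; [exact Hv2 | apply dist2_sym]. }
  destruct (reflect_perp_bisector v1 (0, 0) Hne) as (a & b & c & E & Hv1').
  exists (reflect_pt a b c v2); split.
  - exact (P_reflect _ _ _ _ _ (Ls_perp_bisector _ _ Hv1 P00 Hne) E Hv2).
  - rewrite <- (dist2_reflect_pt a b c v1 v2), Hv1', dist2_sym by apply E.
    reflexivity.
Qed.

(* The bisector of the angle between the line 0w and the x-axis that meets
   the positive half-axis sends w to (|w|, 0). *)
Lemma P_norm_xaxis w : P w -> P (sqrt (dist2 w (0, 0)), 0).
Proof.
  intros Hw; destruct w as [wx wy].
  replace (dist2 (wx, wy) (0, 0)) with (wx ^ 2 + wy ^ 2)
    by (unfold dist2; cbn; ring).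
  set (r := sqrt (wx ^ 2 + wy ^ 2)).
  assert (Hr : r * r = wx ^ 2 + wy ^ 2) by (apply sqrt_sqrt; nra).
  assert (Hr0 : 0 <= r) by apply sqrt_pos.
  destruct (Req_dec wy 0) as [-> | Hy].
  - assert (Hrx : r = Rabs wx)
      by (unfold r; rewrite <- sqrt_Rsqr_abs; f_equal; unfold Rsqr; ring).
    rewrite Hrx; unfold Rabs; destruct (Rcase_abs wx).
    + now apply P_oppx, (P_proj_x _ 0).
    + now apply (P_proj_x _ 0).
  - assert (Hrpos : 0 < r) by nra.
    assert (Hrwx : r + wx <> 0) by nra.
    assert (Hne : (0, 0) <> (wx, wy)) by (intros E; injection E; lra).
    assert (Ew : line_eqn (line_through (0, 0) (wx, wy)) (- wy) wx 0).
    { split; [left; lra|]. intros [u v]; unfold line_through, line_of; cbn.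
      split; intros; lra. }
    pose proof (line_eqn_xaxis (- r) ltac:(lra)) as Ex.
    assert (Hbis : Ls (line_of (- wy - 0) (wx - - r) (0 - 0))).
    { apply (Ls_equidistant _ _ _ _ _ _ _ _
               (Ls_line_through _ _ P00 Hw Hne) Ls_xaxis Ew Ex); try (left; lra).
      - nra.
      - exists (wx, wy); rewrite (proj2 Ew), (proj2 Ex); unfold line_of; cbn.
        split; [ring | nra]. }
    apply (P_eq_reflect _ _ _ _ _ _ Hbis
             (line_eqn_line_of (- wy - 0) (wx - - r) (0 - 0)
                ltac:(left; intros E; apply Hy; lra)) Hw).
    unfold reflect_pt; cbn [fst snd].
    replace ((- wy - 0) ^ 2 + (wx - - r) ^ 2) with (2 * r * (r + wx)) by nra.
    replace ((- wy - 0) * wx + (wx - - r) * wy - (0 - 0)) with (r * wy) by ring.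
    f_equal; [|field; lra].
    replace (wx - 2 * (r * wy / (2 * r * (r + wx))) * (- wy - 0))
      with (wx + wy ^ 2 / (r + wx)) by (field; lra).
    replace (wy ^ 2) with ((r - wx) * (r + wx)) by nra.
    field; lra.
Qed.

Lemma P_dist_xaxis v1 v2 x : P v1 -> P v2 -> Rabs x = Defs.dist v1 v2 -> P (x, 0).
Proof.
  intros Hv1 Hv2 Hx.
  destruct (P_dist2_origin v1 v2 Hv1 Hv2) as [w [Hw Hd]].
  pose proof (P_norm_xaxis w Hw) as Hr; rewrite Hd in Hr; fold (Defs.dist v1 v2) in Hr.
  rewrite <- Hx in Hr; unfold Rabs in Hr; destruct (Rcase_abs x); [|exact Hr].
  rewrite <- (Ropp_involutive x); now apply P_oppx.
Qed.

End OrigamiClosed.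

Lemma F0_of_P0_xaxis x : P0 (x, 0) -> F0 x.
Proof.
  intros Hx; exists (0, 0), (x, 0); split; [now intros P H00 _ _ | split; [exact Hx|]].
  unfold Defs.dist, dist2; cbn; rewrite <- sqrt_Rsqr_abs; f_equal; unfold Rsqr; ring.
Qed.

Theorem mainTheorem2 : forall x y : R, P0 (x, y) <-> (F0 x /\ F0 y).
Proof.
  intros x y; split.
  - intros Hxy; split; apply F0_of_P0_xaxis; intros P H00 H01 [Ls HO];
      specialize (Hxy P H00 H01 (ex_intro _ Ls HO)).
    + exact (P_proj_x P Ls HO H00 H01 x y Hxy).
    + exact (P_proj_x P Ls HO H00 H01 y x (P_swap P Ls HO H00 H01 x y Hxy)).
  - intros [[v1 [v2 (Hv1 & Hv2 & Hx)]] [u1 [u2 (Hu1 & Hu2 & Hy)]]] P H00 H01 Hclosed.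
    assert (HP : forall v, P0 v -> P v) by (intros v Hv; exact (Hv P H00 H01 Hclosed)).
    destruct Hclosed as [Ls HO].
    apply (P_pair P Ls HO H00 H01).
    + exact (P_dist_xaxis P Ls HO H00 H01 v1 v2 x (HP v1 Hv1) (HP v2 Hv2) Hx).
    + apply (P_swap P Ls HO H00 H01).
      exact (P_dist_xaxis P Ls HO H00 H01 u1 u2 y (HP u1 Hu1) (HP u2 Hu2) Hy).
Qed.
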